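(* Fix $q\ge 2$ and $z\in\mathbb Z$. There exist an integer $N$ and a constant $C>0$ (independent of $n$) such that for all $n\ge N$, with $k=\lceil\log_q n\rceil+z$, $$\log_2 q-\frac{C}{n}\le E_{k,q}\le \log_2 q.$$
   Context: $\Sigma_q=\{0,\dots,q-1\}$. A vector in $\Sigma_q^m$ is a $k$-RLL vector if $m<k$ or it has no run of $k$ consecutive zeros; $a_q(m,k)$ is the number of such vectors. For fixed $k,q$, $E_{k,q}=\lim_{m\to\infty}\frac{\log_2 a_q(m,k)}{m}$ (this limit exists). *)

From Stdlib Require Import Reals Lra Lia ZArith Arith List Bool.
Import ListNotations.
Open Scope R_scope.

Fixpoint words (q m : nat) : list (list nat) :=
  match m with
  | O => [[]]
  | S m' => flat_map (fun x => map (cons x) (words q m')) (seq 0 q)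
  end.

Fixpoint zero_prefix (k : nat) (w : list nat) : bool :=
  match k with
  | O => true
  | S k' => match w with
            | O :: w' => zero_prefix k' w'
            | _ => false
            end
  end.

Fixpoint has_zero_run (k : nat) (w : list nat) : bool :=
  zero_prefix k w || match w with [] => false | _ :: w' => has_zero_run k w' end.

Definition is_RLL (m k : nat) (w : list nat) : bool :=
  Nat.ltb m k || negb (has_zero_run k w).

Definition a_q (q m k : nat) : nat :=
  length (filter (is_RLL m k) (words q m)).

Definition log2 (x : R) : R := ln x / ln 2.

(* the sequence log2 a_q(m,k) / m, whose limit (m -> oo) is E_{k,q} *)
Definition rll_rate (q k m : nat) : R := log2 (INR (a_q q m k)) / INR m.

Definition ceilR (x : R) : Z := (- (up (- x) - 1))%Z.

Definition ceil_logq (q n : nat) : Z := ceilR (ln (INR n) / ln (INR q)).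

(* The upper bound is trivial: there are at most q^m words of length m.
   For the lower bound, call a word a block if it begins with a nonzero
   symbol and has no run of k zeros.  Blocks concatenate to k-RLL words,
   so a_q(jL, k) >= g^j with g the number of blocks of length L, whence
   E_{k,q} >= log2 g / L.  By the union bound at most m q^(m-k) words of
   length m contain a run; for m = q^(k-1) this is q^(m-1) <= q^m / 2, and
   prefixing a 1 turns the remaining words into blocks of length m + 1.
   Hence E_{k,q} >= (m log2 q - 1) / (m + 1) = log2 q - (log2 q + 1) / (m + 1),
   and k >= ceil(log_q n) - |z| gives m + 1 >= n / q^(|z|+1). *)

From Stdlib Require Import Reals ZArith Lia Lra List Bool Arith.
Import ListNotations.
Local Open Scope nat_scope.

Definition nwords (q m : nat) (P : list nat -> bool) : nat :=
  length (filter P (words q m)).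

Lemma list_sum_map_le (A : Type) (f g : A -> nat) (l : list A) :
  (forall x, f x <= g x) -> list_sum (map f l) <= list_sum (map g l).
Proof. intros H; induction l as [|x l IH]; simpl; [lia|]. specialize (H x); lia. Qed.

Lemma list_sum_map_mul_r (A : Type) (f : A -> nat) (c : nat) (l : list A) :
  list_sum (map (fun x => f x * c) l) = list_sum (map f l) * c.
Proof. induction l as [|x l IH]; simpl; lia. Qed.

Lemma list_sum_map_const (A : Type) (c : nat) (l : list A) :
  list_sum (map (fun _ => c) l) = length l * c.
Proof. induction l as [|x l IH]; simpl; lia. Qed.

Lemma length_words q m : length (words q m) = q ^ m.
Proof.
  induction m as [|m IH]; [reflexivity|]. simpl words.
  rewrite (flat_map_constant_length (c := q ^ m)), length_seq; [reflexivity|].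
  intros x _. now rewrite length_map.
Qed.

Lemma nwords_S q m P :
  nwords q (S m) P =
  list_sum (map (fun x => nwords q m (fun w => P (x :: w))) (seq 0 q)).
Proof.
  unfold nwords. simpl words. rewrite flat_map_concat_map, <- concat_filter_map.
  rewrite length_concat, !map_map. f_equal. apply map_ext. intros x.
  now rewrite filter_map_swap, length_map.
Qed.

Lemma nwords_ext q m P Q : (forall w, P w = Q w) -> nwords q m P = nwords q m Q.
Proof. intros H. unfold nwords. now rewrite (filter_ext P Q H). Qed.

Lemma nwords_mono q m P Q :
  (forall w, P w = true -> Q w = true) -> nwords q m P <= nwords q m Q.
Proof.
  intros H. unfold nwords. induction (words q m) as [|w l IH]; simpl; [lia|].
  destruct (P w) eqn:Pw; [rewrite (H w Pw); simpl; lia|].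
  destruct (Q w); simpl; lia.
Qed.

Lemma nwords_orb q m P Q :
  nwords q m (fun w => P w || Q w) <= nwords q m P + nwords q m Q.
Proof.
  unfold nwords. induction (words q m) as [|w l IH]; simpl; [lia|].
  destruct (P w), (Q w); simpl; lia.
Qed.

Lemma nwords_le_pow q m P : nwords q m P <= q ^ m.
Proof. rewrite <- length_words. apply filter_length_le. Qed.

Lemma nwords_true q m : nwords q m (fun _ => true) = q ^ m.
Proof. unfold nwords. now rewrite filter_true, length_words. Qed.

Lemma nwords_negb q m P :
  nwords q m P + nwords q m (fun w => negb (P w)) = q ^ m.
Proof. unfold nwords. now rewrite filter_length, length_words. Qed.

Lemma nwords_tl q m P :
  nwords q (S m) (fun w => P (tl w)) = q * nwords q m P.
Proof.
  rewrite nwords_S, (map_ext _ (fun _ => nwords q m P)) by reflexivity.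
  now rewrite list_sum_map_const, length_seq.
Qed.

Lemma nwords_app q a b P Q R :
  (forall u v, P u = true -> Q v = true -> R (u ++ v) = true) ->
  (nwords q a P * nwords q b Q <= nwords q (a + b) R).
Proof.
  revert P R; induction a as [|a IH]; intros P R H.
  - unfold nwords at 1; simpl. destruct (P []) eqn:P0; simpl; [|lia].
    rewrite Nat.add_0_r. apply nwords_mono. intros v Qv. exact (H [] v P0 Qv).
  - rewrite Nat.add_succ_l, !nwords_S, <- list_sum_map_mul_r.
    apply list_sum_map_le. intros x. apply IH. intros u v Pu Qv. exact (H (x :: u) v Pu Qv).
Qed.

Lemma nwords_false q m : nwords q m (fun _ => false) = 0.
Proof. unfold nwords. now rewrite filter_false. Qed.

Lemma nwords_zero_prefix_S q m k : 1 <= q ->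
  nwords q (S m) (zero_prefix (S k)) = nwords q m (zero_prefix k).
Proof.
  intros hq. rewrite nwords_S. destruct q as [|q]; [lia|].
  change (seq 0 (S q)) with ([0] ++ seq 1 q).
  rewrite map_app, list_sum_app, (map_ext_in _ (fun _ => 0) (seq 1 q)), list_sum_map_const;
    [simpl; now rewrite Nat.mul_0_r, !Nat.add_0_r|].
  intros [|x] Hx; [apply in_seq in Hx; lia|]. apply nwords_false.
Qed.

Lemma nwords_zero_prefix q m k : 1 <= q ->
  nwords q m (zero_prefix k) * q ^ k <= q ^ m.
Proof.
  intros hq. revert m; induction k as [|k IH]; intros m.
  - rewrite (nwords_ext _ _ _ (fun _ => true)) by reflexivity.
    rewrite nwords_true, Nat.pow_0_r. lia.
  - destruct m as [|m].
    + unfold nwords; simpl. lia.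
    + rewrite nwords_zero_prefix_S by exact hq. specialize (IH m). simpl. nia.
Qed.

Lemma has_zero_run_tl k w : has_zero_run k w = zero_prefix k w || has_zero_run k (tl w).
Proof. destruct w as [|x w]; simpl; [now rewrite orb_false_r, orb_diag|reflexivity]. Qed.

Lemma nwords_has_zero_run q m k : 1 <= q -> 1 <= k ->
  nwords q m (has_zero_run k) * q ^ k <= m * q ^ m.
Proof.
  intros hq hk. induction m as [|m IH].
  - destruct k as [|k]; [lia|]. unfold nwords; simpl. lia.
  - rewrite (nwords_ext _ _ _ _ (has_zero_run_tl k)).
    pose proof (nwords_orb q (S m) (zero_prefix k) (fun w => has_zero_run k (tl w))) as Horb.
    rewrite nwords_tl in Horb.
    pose proof (nwords_zero_prefix q (S m) k hq). simpl in *. nia.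
Qed.

Definition head_nonzero (w : list nat) : bool :=
  match w with [] => true | x :: _ => negb (x =? 0) end.

Definition rll_block (k : nat) (w : list nat) : bool :=
  head_nonzero w && negb (has_zero_run k w).

Lemma zero_prefix_app_nonzero k u y v : y <> 0 ->
  zero_prefix k (u ++ y :: v) = true -> zero_prefix k u = true.
Proof.
  revert u; induction k as [|k IH]; intros u Hy H; [reflexivity|].
  destruct u as [|[|x] u]; simpl in *; try discriminate.
  - destruct y; [congruence|discriminate].
  - exact (IH u Hy H).
Qed.

Lemma has_zero_run_app_nonzero k u y v : y <> 0 ->
  has_zero_run k u = false -> has_zero_run k (y :: v) = false ->
  has_zero_run k (u ++ y :: v) = false.
Proof.
  intros Hy. induction u as [|x u IH]; intros Hu Hv; [exact Hv|].
  simpl in Hu |- *. apply orb_false_elim in Hu as [Hx Hu].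
  rewrite (IH Hu Hv), orb_false_r.
  destruct (zero_prefix k (x :: u ++ y :: v)) eqn:E; [|reflexivity].
  rewrite (zero_prefix_app_nonzero k (x :: u) y v Hy E) in Hx. discriminate.
Qed.

Lemma rll_block_app k u v :
  rll_block k u = true -> rll_block k v = true -> rll_block k (u ++ v) = true.
Proof.
  unfold rll_block. intros Hu Hv.
  destruct u as [|x u]; [exact Hv|]. destruct v as [|y v]; [now rewrite app_nil_r|].
  apply andb_prop in Hu as [Hx Hu]. apply andb_prop in Hv as [Hy Hv].
  apply negb_true_iff in Hu, Hv. apply negb_true_iff, Nat.eqb_neq in Hy.
  rewrite has_zero_run_app_nonzero by assumption. now rewrite andb_true_r.
Qed.

Lemma rll_block_nil k : 1 <= k -> rll_block k [] = true.
Proof. now destruct k. Qed.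

Lemma rll_block_is_RLL m k w : rll_block k w = true -> is_RLL m k w = true.
Proof.
  unfold rll_block, is_RLL. intros H. apply andb_prop in H as [_ H].
  now rewrite H, orb_true_r.
Qed.

Lemma nwords_rll_block_pow q k L j : 1 <= k ->
  nwords q L (rll_block k) ^ j <= nwords q (j * L) (rll_block k).
Proof.
  intros hk. induction j as [|j IH].
  - unfold nwords. simpl. now rewrite rll_block_nil.
  - rewrite Nat.pow_succ_r'.
    eapply Nat.le_trans; [|apply nwords_app, rll_block_app].
    now apply Nat.mul_le_mono_l.
Qed.

Lemma nwords_no_zero_run_le_rll_block q m k : 2 <= q -> 1 <= k ->
  nwords q m (fun w => negb (has_zero_run k w)) <= nwords q (S m) (rll_block k).
Proof.
  intros hq hk. rewrite nwords_S.
  destruct q as [|[|q]]; [lia|lia|]. simpl seq. simpl map. simpl list_sum.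
  enough (E : nwords (S (S q)) m (fun w => negb (has_zero_run k w)) =
              nwords (S (S q)) m (fun w => rll_block k (1 :: w))) by lia.
  apply nwords_ext. intros w. destruct k; [lia|]. reflexivity.
Qed.

Lemma nwords_rll_block_half q k : 2 <= q -> 1 <= k ->
  q ^ q ^ (k - 1) <= 2 * nwords q (S (q ^ (k - 1))) (rll_block k).
Proof.
  intros hq hk. set (m := q ^ (k - 1)).
  assert (Hm : 1 <= m) by (apply Nat.neq_0_lt_0, Nat.pow_nonzero; lia).
  assert (HqK : q ^ k = q * m) by (unfold m; rewrite <- Nat.pow_succ_r'; f_equal; lia).
  pose proof (nwords_has_zero_run q m k ltac:(lia) hk) as Hbad.
  pose proof (nwords_negb q m (has_zero_run k)) as Hsplit.
  pose proof (nwords_no_zero_run_le_rll_block q m k hq hk) as Hfree.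
  rewrite HqK in Hbad.
  assert (Hbad' : nwords q m (has_zero_run k) * q <= q ^ m) by nia.
  nia.
Qed.

Local Open Scope R_scope.

Lemma ln_0 : ln 0 = 0.
Proof. unfold ln. destruct (Rlt_dec 0 0) as [H|_]; [exfalso; lra|reflexivity]. Qed.

Lemma ln2_pos : 0 < ln 2.
Proof. rewrite <- ln_1. apply ln_increasing; lra. Qed.

Lemma ln_le x y : 0 < x -> x <= y -> ln x <= ln y.
Proof.
  intros Hx [Hxy|<-]; [|lra]. left. now apply ln_increasing.
Qed.

(* Since Stdlib's [ln] sends 0 to 0, the next two facts hold on all of [nat]. *)
Lemma ln_INR_le (a b : nat) : (a <= b)%nat -> ln (INR a) <= ln (INR b).
Proof.
  intros Hab. destruct a as [|a].
  - rewrite INR_0, ln_0. destruct b as [|b]; [rewrite INR_0, ln_0; lra|].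
    rewrite <- ln_1. apply ln_le; [lra|]. rewrite <- INR_1. apply le_INR. lia.
  - apply ln_le; [apply lt_0_INR; lia|]. now apply le_INR.
Qed.

Lemma ln_INR_pow (a j : nat) : ln (INR (a ^ j)) = INR j * ln (INR a).
Proof.
  destruct a as [|a].
  - destruct j as [|j]; simpl; [rewrite ln_1; lra|]. rewrite ln_0. lra.
  - rewrite pow_INR. apply ln_pow. apply lt_0_INR. lia.
Qed.

Lemma Un_cv_le_frequently (u : nat -> R) E c : Un_cv u E ->
  (forall N, exists n, (N <= n)%nat /\ u n <= c) -> E <= c.
Proof.
  intros Hu Hfreq. destruct (Rle_lt_dec E c) as [|Hlt]; [assumption|].
  destruct (Hu (E - c)) as [N HN]; [lra|].
  destruct (Hfreq N) as [n [Hn Hc]]. specialize (HN n Hn).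
  unfold Rdist in HN. apply Rabs_def2 in HN. lra.
Qed.

Lemma Un_cv_ge_frequently (u : nat -> R) E c : Un_cv u E ->
  (forall N, exists n, (N <= n)%nat /\ c <= u n) -> c <= E.
Proof.
  intros Hu Hfreq. apply Ropp_le_cancel.
  apply (Un_cv_le_frequently (fun n => - u n)); [now apply CV_opp|].
  intros N. destruct (Hfreq N) as [n [Hn Hc]]. exists n. split; [exact Hn|lra].
Qed.

Lemma rll_rate_le_log2 q k m : (1 <= m)%nat -> rll_rate q k m <= log2 (INR q).
Proof.
  intros Hm. pose proof ln2_pos.
  assert (HmR : 0 < INR m) by (apply lt_0_INR; lia).
  unfold rll_rate, log2. apply Rmult_le_reg_r with (INR m * ln 2); [nra|].
  field_simplify; [|lra|lra].
  rewrite <- ln_INR_pow. apply ln_INR_le, nwords_le_pow.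
Qed.

Lemma rll_rate_ge_block q k L j : (1 <= k)%nat -> (1 <= L)%nat -> (1 <= j)%nat ->
  log2 (INR (nwords q L (rll_block k))) / INR L <= rll_rate q k (j * L).
Proof.
  intros hk hL hj. pose proof ln2_pos.
  assert (HL : 0 < INR L) by (apply lt_0_INR; lia).
  assert (Hj : 0 < INR j) by (apply lt_0_INR; lia).
  assert (Hpow : (nwords q L (rll_block k) ^ j <= a_q q (j * L) k)%nat).
  { eapply Nat.le_trans; [now apply nwords_rll_block_pow|].
    apply nwords_mono, rll_block_is_RLL. }
  unfold rll_rate, log2. rewrite mult_INR.
  apply Rmult_le_reg_r with (INR j * INR L * ln 2); [apply Rmult_lt_0_compat; [nra|lra]|].
  field_simplify; [|lra|lra].
  rewrite Rmult_comm, <- ln_INR_pow. now apply ln_INR_le.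
Qed.

Lemma rll_limit_le_log2 q k E : Un_cv (rll_rate q k) E -> E <= log2 (INR q).
Proof.
  intros HE. apply (Un_cv_le_frequently _ _ _ HE). intros N.
  exists (S N). split; [lia|]. apply rll_rate_le_log2. lia.
Qed.

Lemma rll_limit_ge_block q k L E : (1 <= k)%nat -> (1 <= L)%nat ->
  Un_cv (rll_rate q k) E ->
  log2 (INR (nwords q L (rll_block k))) / INR L <= E.
Proof.
  intros hk hL HE. apply (Un_cv_ge_frequently _ _ _ HE). intros N.
  exists (S N * L)%nat. split; [nia|]. apply rll_rate_ge_block; lia.
Qed.

Lemma log2_nwords_rll_block_ge q k : (2 <= q)%nat -> (1 <= k)%nat ->
  INR (q ^ (k - 1)) * log2 (INR q) - 1
  <= log2 (INR (nwords q (S (q ^ (k - 1))) (rll_block k))).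
Proof.
  intros hq hk. pose proof ln2_pos.
  set (m := (q ^ (k - 1))%nat). set (g := nwords q (S m) (rll_block k)).
  assert (Hhalf : (q ^ m <= 2 * g)%nat) by exact (nwords_rll_block_half q k hq hk).
  assert (Hg : 0 < INR g).
  { apply lt_0_INR. enough (1 <= q ^ m)%nat by lia.
    apply Nat.neq_0_lt_0, Nat.pow_nonzero. lia. }
  apply ln_INR_le in Hhalf.
  rewrite ln_INR_pow, mult_INR, ln_mult in Hhalf by (simpl; lra).
  unfold log2. apply Rmult_le_reg_r with (ln 2); [exact H|].
  field_simplify; [|lra|lra]. replace (INR 2) with 2 in Hhalf by (simpl; lra). lra.
Qed.

Lemma rll_limit_ge q k E : (2 <= q)%nat -> (1 <= k)%nat ->
  Un_cv (rll_rate q k) E ->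
  log2 (INR q) - (log2 (INR q) + 1) / (INR (q ^ (k - 1)) + 1) <= E.
Proof.
  intros hq hk HE.
  pose proof (rll_limit_ge_block q k (S (q ^ (k - 1))) E hk ltac:(lia) HE) as Hblock.
  pose proof (log2_nwords_rll_block_ge q k hq hk) as Hg.
  set (m := INR (q ^ (k - 1))) in *. rewrite S_INR in Hblock. fold m in Hblock.
  assert (Hm : 0 <= m) by apply pos_INR.
  eapply Rle_trans; [|exact Hblock].
  replace (log2 (INR q) - (log2 (INR q) + 1) / (m + 1))
    with ((m * log2 (INR q) - 1) / (m + 1)) by (field; lra).
  apply Rmult_le_compat_r; [left; apply Rinv_0_lt_compat; lra|exact Hg].
Qed.

Lemma ceilR_ge x : x <= IZR (ceilR x).
Proof.
  unfold ceilR. destruct (archimed (- x)) as [_ Hup].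
  rewrite opp_IZR, minus_IZR. lra.
Qed.

Lemma pow_ceil_logq_ge q n : (2 <= q)%nat -> (1 <= n)%nat ->
  (n <= q ^ Z.to_nat (ceil_logq q n))%nat.
Proof.
  intros hq hn. unfold ceil_logq. set (x := ln (INR n) / ln (INR q)).
  assert (Hq : 1 < INR q) by (apply lt_1_INR; lia).
  assert (Hlq : 0 < ln (INR q)) by (rewrite <- ln_1; apply ln_increasing; lra).
  assert (Hn : 0 < INR n) by (apply lt_0_INR; lia).
  assert (Hx : 0 <= x).
  { unfold x. apply Rle_mult_inv_pos; [|exact Hlq].
    rewrite <- ln_1. apply ln_le; [lra|]. rewrite <- INR_1. now apply le_INR. }
  pose proof (ceilR_ge x) as Hc.
  assert (Hc0 : (0 <= ceilR x)%Z) by (apply le_IZR; lra).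
  apply INR_le. destruct (Rle_lt_dec (INR n) (INR (q ^ Z.to_nat (ceilR x)))) as [|Hlt];
    [assumption|exfalso].
  apply ln_increasing in Hlt; [|apply lt_0_INR, Nat.neq_0_lt_0, Nat.pow_nonzero; lia].
  rewrite ln_INR_pow, INR_IZR_INZ, Z2Nat.id in Hlt by exact Hc0.
  assert (ln (INR n) = x * ln (INR q)) by (unfold x; field; lra).
  nra.
Qed.

Lemma ceil_logq_shift_bounds q z n : (2 <= q)%nat ->
  (q ^ (Z.to_nat (Z.abs z) + 1) <= n)%nat ->
  (1 <= Z.to_nat (ceil_logq q n + z))%nat /\
  (n <= q ^ (Z.to_nat (ceil_logq q n + z) - 1) * q ^ (Z.to_nat (Z.abs z) + 1))%nat.
Proof.
  intros hq hn. set (c := ceil_logq q n). set (a := Z.to_nat (Z.abs z)) in *.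
  assert (Hc : (n <= q ^ Z.to_nat c)%nat).
  { apply pow_ceil_logq_ge; [exact hq|].
    enough (1 <= q ^ (a + 1))%nat by lia. apply Nat.neq_0_lt_0, Nat.pow_nonzero. lia. }
  assert (Hk : (1 <= Z.to_nat (c + z))%nat).
  { destruct (Nat.le_gt_cases 1 (Z.to_nat (c + z))) as [|H0]; [assumption|exfalso].
    assert (Hca : (Z.to_nat c <= a)%nat) by (unfold a; lia).
    assert (q ^ Z.to_nat c < q ^ (a + 1))%nat by (apply Nat.pow_lt_mono_r; lia).
    lia. }
  split; [exact Hk|].
  rewrite <- Nat.pow_add_r. eapply Nat.le_trans; [exact Hc|].
  apply Nat.pow_le_mono_r; unfold a; lia.
Qed.

Theorem lemma3 (q : nat) (z : Z) (hq : (2 <= q)%nat) :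
  exists (N : nat) (C : R), C > 0 /\
    forall n : nat, (N <= n)%nat ->
      forall E : R,
        Un_cv (rll_rate q (Z.to_nat (ceil_logq q n + z)%Z)) E ->
        log2 (INR q) - C / INR n <= E <= log2 (INR q).
Proof.
  set (D := (q ^ (Z.to_nat (Z.abs z) + 1))%nat).
  set (l := log2 (INR q)).
  assert (Hl : 0 < l).
  { unfold l, log2. apply Rdiv_lt_0_compat; [|exact ln2_pos].
    rewrite <- ln_1. apply ln_increasing; [lra|]. apply lt_1_INR. lia. }
  assert (HD : 1 <= INR D).
  { rewrite <- INR_1. apply le_INR. apply Nat.neq_0_lt_0, Nat.pow_nonzero. lia. }
  exists D, ((l + 1) * INR D). split; [nra|].
  intros n Hn E HE.
  destruct (ceil_logq_shift_bounds q z n hq Hn) as [Hk HnD].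
  split; [|exact (rll_limit_le_log2 _ _ _ HE)].
  eapply Rle_trans; [|exact (rll_limit_ge _ _ _ hq Hk HE)].
  apply le_INR in HnD, Hn. rewrite mult_INR in HnD. fold D l in HnD, Hn |- *.
  set (m := INR (q ^ (Z.to_nat (ceil_logq q n + z) - 1))) in *.
  assert (Hm : 0 <= m) by apply pos_INR.
  apply Rplus_le_compat_l, Ropp_le_contravar.
  unfold Rdiv. rewrite Rmult_assoc. apply Rmult_le_compat_l; [lra|].
  apply Rmult_le_reg_r with ((m + 1) * INR n); [nra|].
  field_simplify; nra.
Qed.
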